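(* Let $K$ be a field with algebraic closure $\overline{K}$, $U=\{u_1,\dots,u_d\}$ parameters and $X=\{x_1,\dots,x_n\}$ variables ordered $u_1\prec\dots\prec u_d\prec x_1\prec\dots\prec x_n$. Let $\mathbf{P}=\{p\}$ be a parametric system in $K[U][X]$ consisting of a single polynomial $p$, let $\mathbb{S}$ be a Wu's decomposition of $\mathbf{P}$ in $K[U][X]$, and let $\mathcal{L}=\{\mathbf{C}_{l,1},\dots,\mathbf{C}_{l,k}\}$ be a line of $\mathbb{S}$. Then for every $a\in\overline{K}^d\setminus\mathrm{V}^U(\mathbf{C}_{l,k})$, $p(a)$ is not the zero polynomial of $\overline{K}[X]$.
   Context: A parametric system is a non-empty finite subset of $K[U][X]\setminus K[X]$. For $F\in K[U][X]\setminus\{0\}$, its class is the largest $p$ with $\deg(F,x_p)>0$ (0 if none); if the class is $p>0$ the main variable is $x_p$ and, writing $F=C_0x_p^m+\dots+C_m$ with $C_0\ne0$, the initial is $\mathrm{I}(F)=C_0$. A triangular set is $\{T_1,\dots,T_r\}$ with strictly increasing positive classes. A non-contradictory ascending chain is a triangular set in which each $T_i$ has degree in $\mathrm{mvar}(T_j)$ less than $\deg(T_j,\mathrm{mvar}(T_j))$ for all $j<i$; a contradictory ascending chain is $\{F\}$ with $0\ne F\in K[U]$. An ascending chain $\mathbf{C}$ is a characteristic set of $\mathbf{P}$ if $\mathbf{C}\subset\langle\mathbf{P}\rangle_{K[U][X]}$ and the successive pseudo-remainder of each element of $\mathbf{P}$ w.r.t. $\mathbf{C}$ is $0$. A Wu's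 decomposition of $\mathbf{P}$ is the finite set of ascending chains produced by Wu's method: compute a characteristic set $\mathbf{C}$ of $\mathbf{P}$; if $\mathbf{C}=\{C_1,\dots,C_t\}$ is non-contradictory, recursively apply the method to each $\mathbf{P}\cup\mathbf{C}\cup\{\mathrm{I}(C_i)\}$; all characteristic sets obtained form the decomposition. A line of a Wu's decomposition $\mathbb{S}$ of $\mathbf{P}_1$ is a subset $\{\mathbf{C}_{l,1},\dots,\mathbf{C}_{l,k}\}$ such that $\mathbf{C}_{l,1}$ is a characteristic set of $\mathbf{P}_1$; for $2\le i\le k$, $\mathbf{C}_{l,i}$ is a characteristic set of $\mathbf{P}_i=\mathbf{P}_{i-1}\cup\mathbf{C}_{l,i-1}\cup\{\mathrm{I}(C_{l,i-1})\}$ for some $C_{l,i-1}\in\mathbf{C}_{l,i-1}$; and $\mathbf{C}_{l,1},\dots,\mathbf{C}_{l,k-1}$ are non-contradictory while $\mathbf{C}_{l,k}$ is contradictory. $F(a)$ denotes substitution of $a\in\overline{K}^d$ for $U$; $\mathrm{V}^U(\mathbf{B})$ is the common zero set in $\overline{K}^d$ of $\mathbf{B}\subset K[U]$. *)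

From HB Require Import structures.
From mathcomp Require Import all_boot all_order all_algebra.
From mathcomp Require Import mpoly.
Set Implicit Arguments. Unset Strict Implicit. Unset Printing Implicit Defensive.
Import Order.TTheory GRing.Theory.
Local Open Scope ring_scope.

(* K[U][X] is represented as {mpoly {mpoly K[d]}[n]}: polynomials in the
   n variables X = x_1..x_n (indices 0..n-1, x_1 smallest) whose coefficients
   are polynomials in the d parameters U. *)

Section WuDefs.
Context (K : fieldType) (d n : nat).
Local Notation KU := {mpoly K[d]}.
Local Notation KUX := {mpoly KU[n]}.

Definition degx (F : KUX) (j : nat) : nat :=
  (\max_(m <- msupp F) \max_(i < n | (i : nat) == j) m i)%N.

Definition cls (F : KUX) : nat := (\max_(i < n | 0 < degx F i) (i : nat).+1)%N.

Definition xpow (j k : nat) : KUX :=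
  'X_[ [multinom (if (i : nat) == j then k else 0%N) | i < n] ].

Definition coef_x (F : KUX) (j k : nat) : KUX :=
  \sum_(m <- msupp F | [forall i : 'I_n, ((i : nat) == j) ==> (m i == k)])
     F@_m *: 'X_[ [multinom (if (i : nat) == j then 0%N else m i) | i < n] ].

(* initial of F (meaningful when cls F > 0): leading coefficient w.r.t. mvar *)
Definition init (F : KUX) : KUX :=
  coef_x F (cls F).-1 (degx F (cls F).-1).

Definition prem_step (F G : KUX) : KUX :=
  let j := (cls F).-1 in
  let mF := degx F j in
  let mG := degx G j in
  if (G != 0) && (mF <= mG)%N
  then init F * G - coef_x G j mG * xpow j (mG - mF) * F
  else G.

(* pseudo-remainder of G w.r.t. F; for F of class 0 (a nonzero element of
   K[U]) the pseudo-remainder is 0. *)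
Definition prem (G F : KUX) : KUX :=
  if cls F == 0%N then 0
  else iter (degx G (cls F).-1).+1 (prem_step F) G.

Definition sprem (G : KUX) (C : seq KUX) : KUX :=
  foldr (fun T acc => prem acc T) G C.

Definition triangular (C : seq KUX) : bool :=
  sorted (fun a b => (cls a < cls b)%N) C && all (fun T => (0 < cls T)%N) C.

Definition noncontra_chain (C : seq KUX) : Prop :=
  triangular C /\
  forall i j : nat, (i < j < size C)%N ->
    (degx (nth (0%R : KUX) C j) (cls (nth (0%R : KUX) C i)).-1 < degx (nth (0%R : KUX) C i) (cls (nth (0%R : KUX) C i)).-1)%N.

Definition contra_chain (C : seq KUX) : Prop :=
  exists c : KU, c != 0 /\ C = [:: c%:MP].

Definition asc_chain (C : seq KUX) : Prop := noncontra_chain C \/ contra_chain C.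

Definition in_ideal (P : seq KUX) (f : KUX) : Prop :=
  exists cs : seq KUX, f = \sum_(i < size P) nth (0%R : KUX) cs i * nth (0%R : KUX) P i.

Definition charset (C P : seq KUX) : Prop :=
  [/\ asc_chain C, (forall c, c \in C -> in_ideal P c)
    & forall g, g \in P -> sprem g C = 0].

Inductive wu_decomp : seq KUX -> seq (seq KUX) -> Prop :=
| WuContra (P C : seq KUX) :
    charset C P -> contra_chain C -> wu_decomp P [:: C]
| WuNonContra (P C : seq KUX) (Ss : seq (seq (seq KUX))) :
    charset C P -> noncontra_chain C -> size Ss = size C ->
    (forall i, (i < size C)%N ->
       wu_decomp (P ++ C ++ [:: init (nth (0%R : KUX) C i)]) (nth [::] Ss i)) ->
    wu_decomp P (C :: flatten Ss).

Definition is_line (S : seq (seq KUX)) (P : seq KUX) (Lc : seq (seq KUX)) : Prop :=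
  (0 < size Lc)%N /\ (forall C, C \in Lc -> C \in S) /\
  exists Ps : seq (seq KUX),
    [/\ size Ps = size Lc, nth [::] Ps 0 = P,
        (forall i, (i < size Lc)%N -> charset (nth [::] Lc i) (nth [::] Ps i)),
        (forall i, (i.+1 < size Lc)%N ->
           noncontra_chain (nth [::] Lc i) /\
           exists c, c \in nth [::] Lc i /\
             nth [::] Ps i.+1 = nth [::] Ps i ++ nth [::] Lc i ++ [:: init c])
      & contra_chain (last [::] Lc)].

Definition in_KX (F : KUX) : Prop := forall m, exists c : K, F@_m = c%:MP.

End WuDefs.

Definition spec (K L : fieldType) (f : {rmorphism K -> L}) (d n : nat)
  (a : 'I_d -> L) (F : {mpoly {mpoly K[d]}[n]}) : {mpoly L[n]} :=
  map_mpoly (mmap f a) F.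

Definition inVU (K L : fieldType) (f : {rmorphism K -> L}) (d n : nat)
  (a : 'I_d -> L) (B : seq {mpoly {mpoly K[d]}[n]}) : Prop :=
  forall F, F \in B -> spec f a F = 0.

From HB Require Import structures.
From mathcomp Require Import all_boot all_order all_algebra.
From mathcomp Require Import mpoly.
Set Implicit Arguments.
Unset Strict Implicit.
Import GRing.Theory.
Local Open Scope ring_scope.

(* If p(a) = 0, specialization at a is a ring morphism killing p, hence the
   whole ideal generated by p.  It also kills the initial of anything it kills,
   since an initial is assembled from coefficients of the polynomial.  So along
   the line every system P_i, and with it every characteristic set C_{l,i} of
   P_i, vanishes at a; for i = k this says a lies in V^U(C_{l,k}). *)

Section IdealKernel.
Context (K : fieldType) (d n : nat) (R : nzRingType).
Local Notation KUX := {mpoly {mpoly K[d]}[n]}.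
Variable g : {rmorphism KUX -> R}.

Lemma in_ideal_kernel (P : seq KUX) (c : KUX) :
  {in P, forall q, g q = 0} -> in_ideal P c -> g c = 0.
Proof.
move=> gP [cs ->]; rewrite rmorph_sum big1 // => i _.
by rewrite rmorphM /= (gP _ (mem_nth 0 (ltn_ord i))) mulr0.
Qed.

Lemma charset_kernel (C P : seq KUX) :
  charset C P -> {in P, forall q, g q = 0} -> {in C, forall c, g c = 0}.
Proof. by case=> _ CP _ gP c /CP; apply: in_ideal_kernel. Qed.

Hypothesis g_init : forall F, g F = 0 -> g (init F) = 0.

Lemma line_last_chain_kernel (S Lc : seq (seq KUX)) (P : seq KUX) :
  is_line S P Lc -> {in P, forall q, g q = 0} ->
  {in last [::] Lc, forall c, g c = 0}.
Proof.
case=> Lc_gt0 [_ [Ps [_ Ps0 Lc_charset Ps_step _]]] gP.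
have gPs i : (i < size Lc)%N -> {in nth [::] Ps i, forall q, g q = 0}.
  elim: i => [|i IHi] Hi; first by rewrite Ps0.
  have [_ [c [c_in ->]]] := Ps_step i Hi.
  have gP_i := IHi (ltnW Hi).
  have gC := charset_kernel (Lc_charset i (ltnW Hi)) gP_i.
  move=> q; rewrite !mem_cat inE => /or3P[/gP_i // | /gC // | /eqP->].
  exact/g_init/gC.
have last_lt : ((size Lc).-1 < size Lc)%N by rewrite prednK.
rewrite (last_nth [::]) -(prednK Lc_gt0) /=.
exact: charset_kernel (Lc_charset _ last_lt) (gPs _ last_lt).
Qed.

End IdealKernel.

Section MapMpolyKernel.
Context (K : fieldType) (d n : nat) (S : nzRingType).
Local Notation KUX := {mpoly {mpoly K[d]}[n]}.
Variable h : {rmorphism {mpoly K[d]} -> S}.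

Lemma map_mpoly_eq0_coef (F : KUX) m : map_mpoly h F = 0 -> h F@_m = 0.
Proof. by move/(congr1 (mcoeff m)); rewrite mcoeff_map_mpoly mcoeff0. Qed.

Lemma map_mpoly_coef_x_eq0 (F : KUX) j k :
  map_mpoly h F = 0 -> map_mpoly h (coef_x F j k) = 0.
Proof.
move=> hF; rewrite raddf_sum /=; apply: big1 => m _.
by rewrite map_mpolyZ (map_mpoly_eq0_coef m hF) scale0r.
Qed.

End MapMpolyKernel.

Theorem corollary1 (K : fieldType) (L : closedFieldType) (f : {rmorphism K -> L})
  (L_alg : forall y : L, exists q : {poly K}, q != 0 /\ root (map_poly f q) y)
  (d n : nat) (p : {mpoly {mpoly K[d]}[n]})
  (p_param : ~ in_KX p)
  (S : seq (seq {mpoly {mpoly K[d]}[n]})) (HS : wu_decomp [:: p] S)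
  (Lc : seq (seq {mpoly {mpoly K[d]}[n]})) (HL : is_line S [:: p] Lc)
  (a : 'I_d -> L) (Ha : ~ inVU f a (last [::] Lc)) :
  spec f a p != 0.
Proof.
apply/negP => /eqP pa0; apply: Ha => F.
apply: (line_last_chain_kernel (g := map_mpoly (mmap f a))) HL _ F.
- by move=> F'; apply: map_mpoly_coef_x_eq0.
- by move=> q; rewrite inE => /eqP->.
Qed.
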